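(* Let $n\ge 4$, let $\emptyset\ne S\subseteq V$, and let $x=(i,j)$ and $y=(i',j')$ be distinct vertices of $K_n\times K_n$. Let $a_r=|L_r\cap S|$ for $r\in\{i,i'\}$ and $b_s=|L^s\cap S|$ for $s\in\{j,j'\}$. (1) If $x,y$ lie in the same horizontal layer (i.e. $j=j'$), then $\Delta_S(x,y)=a_i+a_{i'}+|\{x,y\}\cap S|$. (2) If $x,y$ lie in the same vertical layer (i.e. $i=i'$), then $\Delta_S(x,y)=b_j+b_{j'}+|\{x,y\}\cap S|$. (3) If $x,y$ lie in different layers (i.e. $i\ne i'$ and $j\ne j'$), and $z_1=(i',j)$, $z_2=(i,j')$, then $\Delta_S(x,y)=a_i+a_{i'}+b_j+b_{j'}-|\{x,y\}\cap S|-2|\{z_1,z_2\}\cap S|$.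
   Context: $K_n\times K_n$ is the direct product of two complete graphs on $n$ vertices: vertex set $V=[n]\times[n]$ with $[n]=\{1,\dots,n\}$, and $(i,j)$ adjacent to $(i',j')$ iff $i\ne i'$ and $j\ne j'$; $d$ denotes its graph distance. For $i,j\in[n]$, the vertical layer is $L_i=\{(i,j):j\in[n]\}$ and the horizontal layer is $L^j=\{(i,j):i\in[n]\}$. For vertices $x,y,z$ and $S\subseteq V$, $\Delta_z(x,y)=|d(x,z)-d(y,z)|$ and $\Delta_S(x,y)=\sum_{z\in S}\Delta_z(x,y)$. *)

From mathcomp Require Import all_boot all_order all_algebra.
Set Implicit Arguments. Unset Strict Implicit. Unset Printing Implicit Defensive.

(* Vertices of K_n x K_n: pairs of indices in 'I_n (0-indexed version of [n]). *)
Definition vert (n : nat) := ('I_n * 'I_n)%type.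

Definition adjKK (n : nat) : rel (vert n) :=
  fun u v => (u.1 != v.1) && (u.2 != v.2).

Definition walk_len (T : finType) (e : rel T) (x y : T) (k : nat) : bool :=
  [exists p : k.-tuple T, path e x p && (last x p == y)].

(* Graph distance: least length of a walk from x to y (shortest walks have
   length < #|T|); equals #|T| if y is unreachable (never happens here). *)
Definition gdist (T : finType) (e : rel T) (x y : T) : nat :=
  \big[minn/#|T|]_(k < #|T| | walk_len e x y k) k.

Definition dKK (n : nat) (x y : vert n) : nat := gdist (@adjKK n) x y.

Definition DeltaZ (n : nat) (z x y : vert n) : nat :=
  `|(Posz (dKK x z)) - (Posz (dKK y z))|%N.

Definition DeltaS (n : nat) (S : {set vert n}) (x y : vert n) : nat :=
  \sum_(z in S) DeltaZ z x y.

Definition Lvert (n : nat) (i : 'I_n) : {set vert n} := [set v | v.1 == i].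
Definition Lhor (n : nat) (j : 'I_n) : {set vert n} := [set v | v.2 == j].

From mathcomp Require Import all_boot all_order all_algebra.
From mathcomp Require Import zify.

(* For n >= 3 the distance in K_n x K_n only takes the values 0, 1, 2: two
   distinct non-adjacent vertices have a common neighbour, namely any vertex
   differing from both of them in both coordinates.  Hence Delta_z(x,y) is a
   function of which of the layers through x and y contain z, and each claim is
   a pointwise identity between indicator functions, summed over z in S. *)

Set Implicit Arguments. Unset Strict Implicit. Unset Printing Implicit Defensive.
Import Order.TTheory GRing.Theory.
Local Open Scope ring_scope.

Section GraphDistance.

Variables (T : finType) (e : rel T).

Lemma gdist_shortest_walk (x y : T) (k : nat) : (k < #|T|)%N ->
  walk_len e x y k -> (forall m, (m < k)%N -> ~~ walk_len e x y m) ->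
  gdist e x y = k.
Proof.
move=> ltkT walk_k no_shorter; apply/eqP; rewrite eqn_leq; apply/andP; split.
  exact: (@bigmin_le_cond _ nat _ #|T| (Ordinal ltkT) _ (fun m => nat_of_ord m)).
apply: (@le_bigmin _ nat) => [|m walk_m]; first exact: ltnW.
by rewrite leNgt; apply: contraL walk_m; apply: no_shorter.
Qed.

Lemma walk_len0 (x y : T) : walk_len e x y 0 = (x == y).
Proof.
apply/existsP/eqP => [[p /andP[_ /eqP]]|<-]; first by rewrite tuple0.
by exists [tuple]; rewrite /= eqxx.
Qed.

Lemma walk_len1 (x y : T) : walk_len e x y 1 = e x y.
Proof.
apply/existsP/idP => [[[[|a [|b s]] //= _] /andP[/andP[exa _] /eqP <-]]|exy] //.
by exists [tuple y]; rewrite /= exy eqxx.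
Qed.

Lemma walk_len2 (x w y : T) : e x w -> e w y -> walk_len e x y 2.
Proof. by move=> exw ewy; apply/existsP; exists [tuple w; y]; rewrite /= exw ewy eqxx. Qed.

End GraphDistance.

Lemma sum_mem_card (T : finType) (A S : {set T}) :
  (\sum_(z in S) (z \in A))%N = #|A :&: S|.
Proof.
rewrite -sum1_card big_mkcond [RHS]big_mkcond /=; apply: eq_bigr => z _.
by rewrite in_setI andbC; case: (z \in S).
Qed.

Lemma exists_ord_neq2 (n : nat) (a b : 'I_n) : (2 < n)%N ->
  exists c : 'I_n, (c != a) && (c != b).
Proof.
move=> n_gt2; have := cardsC [set a; b]; rewrite cards2 card_ord => card_n.
have : (0 < #|~: [set a; b]|)%N by move: card_n n_gt2; case: (a != b); lia.
by case/card_gt0P => c; rewrite !inE negb_or; exists c.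
Qed.

Section DistanceKK.

Variables (n : nat) (n_gt2 : (2 < n)%N).

Lemma dKKE (u v : vert n) :
  dKK u v = if u == v then 0%N else if adjKK u v then 1%N else 2%N.
Proof.
have card_gt2 : (2 < #|{: vert n}|)%N by rewrite card_prod card_ord; nia.
rewrite /dKK; have [->|neq_uv] := eqVneq u v.
  by apply: gdist_shortest_walk; rewrite ?walk_len0 ?eqxx // (ltn_trans _ card_gt2).
have [adj_uv|nadj_uv] := boolP (adjKK u v).
  apply: gdist_shortest_walk; rewrite ?walk_len1 // ?(ltn_trans _ card_gt2) //.
  by case=> // _; rewrite walk_len0.
apply: gdist_shortest_walk => //; last first.
  by case=> [|[|m]] // _; rewrite ?walk_len0 ?walk_len1 ?(negbTE nadj_uv).
have [c1 /andP[c1u c1v]] := exists_ord_neq2 u.1 v.1 n_gt2.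
have [c2 /andP[c2u c2v]] := exists_ord_neq2 u.2 v.2 n_gt2.
by apply: (walk_len2 (w := (c1, c2))); rewrite /adjKK /= ?c1v ?c2v // eq_sym c1u eq_sym c2u.
Qed.

Lemma dKKC (u v : vert n) : dKK u v = dKK v u.
Proof. by rewrite !dKKE // eq_sym /adjKK ![v.1 == _]eq_sym ![v.2 == _]eq_sym. Qed.

End DistanceKK.

Lemma neq_not_both_eq (T : eqType) (x a b : T) : a != b -> ~~ ((x == a) && (x == b)).
Proof. by apply: contra => /andP[/eqP <- /eqP <-]. Qed.

Section DeltaPointwise.

Variables (n : nat) (n_gt2 : (2 < n)%N) (i i' j j' : 'I_n) (z : vert n).

Lemma DeltaZ_same_Lhor : i != i' ->
  DeltaZ z (i, j) (i', j) =
    ((z \in Lvert i) + (z \in Lvert i') + (z \in [set (i, j); (i', j)]))%N.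
Proof.
case: z => k l neq_ii'.
have := neq_not_both_eq k neq_ii'.
rewrite /DeltaZ ![dKK _ (k, l)]dKKC // !dKKE // /adjKK !inE !xpair_eqE /=.
by case: (k == i); case: (k == i'); case: (l == j).
Qed.

Lemma DeltaZ_same_Lvert : j != j' ->
  DeltaZ z (i, j) (i, j') =
    ((z \in Lhor j) + (z \in Lhor j') + (z \in [set (i, j); (i, j')]))%N.
Proof.
case: z => k l neq_jj'.
have := neq_not_both_eq l neq_jj'.
rewrite /DeltaZ ![dKK _ (k, l)]dKKC // !dKKE // /adjKK !inE !xpair_eqE /=.
by case: (l == j); case: (l == j'); case: (k == i).
Qed.

Lemma DeltaZ_distinct_layers : i != i' -> j != j' ->
  (DeltaZ z (i, j) (i', j') + (z \in [set (i, j); (i', j')])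
     + 2 * (z \in [set (i', j); (i, j')]))%N =
    ((z \in Lvert i) + (z \in Lvert i') + (z \in Lhor j) + (z \in Lhor j'))%N.
Proof.
case: z => k l neq_ii' neq_jj'.
have := neq_not_both_eq k neq_ii'.
have := neq_not_both_eq l neq_jj'.
rewrite /DeltaZ ![dKK _ (k, l)]dKKC // !dKKE // /adjKK !inE !xpair_eqE /=.
by case: (k == i); case: (k == i'); case: (l == j); case: (l == j').
Qed.

End DeltaPointwise.

Theorem mainTheorem2 (n : nat) (hn : (4 <= n)%N) (S : {set vert n})
  (hS : S != set0) (i j i' j' : 'I_n) (hxy : (i, j) != (i', j')) :
  let x : vert n := (i, j) in
  let y : vert n := (i', j') in
  let a r := #|Lvert r :&: S| in
  let b s := #|Lhor s :&: S| in
  let cxy := #|[set x; y] :&: S| in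
  [/\ j = j' -> DeltaS S x y = (a i + a i' + cxy)%N,
      i = i' -> DeltaS S x y = (b j + b j' + cxy)%N &
      i != i' -> j != j' ->
        let z1 : vert n := (i', j) in
        let z2 : vert n := (i, j') in
        (DeltaS S x y)%:Z =
          (a i)%:Z + (a i')%:Z + (b j)%:Z + (b j')%:Z - cxy%:Z
          - 2 * (#|[set z1; z2] :&: S|)%:Z].
Proof.
have n_gt2 : (2 < n)%N := ltnW hn.
move=> x y a b cxy; split.
- move=> eq_jj'; subst j'.
  have neq_ii' : i != i' by apply: contraNneq hxy => ->.
  rewrite /DeltaS /a /cxy -!sum_mem_card -!big_split.
  by apply: eq_bigr => z _; apply: DeltaZ_same_Lhor.
- move=> eq_ii'; subst i'.
  have neq_jj' : j != j' by apply: contraNneq hxy => ->.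
  rewrite /DeltaS /b /cxy -!sum_mem_card -!big_split.
  by apply: eq_bigr => z _; apply: DeltaZ_same_Lvert.
- move=> neq_ii' neq_jj' z1 z2.
  have count_eq :
      (DeltaS S x y + cxy + 2 * #|[set z1; z2] :&: S| = a i + a i' + b j + b j')%N.
    rewrite /DeltaS /a /b /cxy -!sum_mem_card big_distrr -!big_split.
    by apply: eq_bigr => z _; apply: DeltaZ_distinct_layers.
  apply/eqP; rewrite eq_sym !subr_eq natz -PoszM -!PoszD eqz_nat.
  by rewrite -count_eq addnAC.
Qed.
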